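(* Let $\sigma(x)=1/(1+e^{-x})$, let $N,d\in\mathbb{N}$ with $N>2$, and let $f_{mult}$ and $c_{56}$ be as in the context. Let $0<A\le1$ and assume $c_{56}\cdot4^{dN}\cdot A^{N-1}\le1$. Then there exists a feedforward neural network $f_{mult,d}:\mathbb{R}^d\to\mathbb{R}$ with activation function $\sigma$, with at most $\lceil\log_2 d\rceil$ hidden layers and at most $2Nd$ neurons in each layer, all of whose weights are bounded in absolute value by a constant not depending on $A$, such that for all $x_1,\dots,x_d\in[-A,A]$ $$\Big|f_{mult,d}(x_1,\dots,x_d)-\prod_{j=1}^dx_j\Big|\le c_{57}A^N,$$ where $c_{57}\ge0$ is a constant not depending on $A$.
   Context: Fix $t_\sigma\in\mathbb{R}$ with $\sigma''(t_\sigma)\ne0$, and $\alpha_j,\beta_j$ ($j=0,\dots,N-1$), $c_{54}\ge0$ such that $f_{net,x^2}(x)=\frac{2}{\sigma''(t_\sigma)}\sum_{j=0}^{N-1}\alpha_j\sigma(\beta_jx+t_\sigma)$ satisfies $|f_{net,x^2}(x)-x^2|\le c_{54}A^N$ for all $A>0$, $x\in[-A,A]$. Let $f_{mult}(x,y)=\frac14(f_{net,x^2}(x+y)-f_{net,x^2}(x-y))$ and let $c_{56}>0$ be a constant (depending only on $c_{54},N$) such that $|f_{mult}(x,y)-xy|\le c_{56}A^N$ for all $A>0$, $x,y\in[-A,A]$. A feedforward network with $\sigma$ activation: each hidden neuron computes $\sigma$ of an affine combination of the outputs of the previous layer (or of the inputs), and the output is an affine combination of the last hidden layer (or of the inputs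 if there are no hidden layers). *)

From Stdlib Require Import Reals Lra Lia List.
From Coquelicot Require Import Coquelicot.
Import ListNotations.
Open Scope R_scope.

Definition logistic (x : R) : R := 1 / (1 + exp (- x)).

Definition lsum (n : nat) (f : nat -> R) : R := fold_right Rplus 0 (map f (seq 0 n)).
Definition lprod (n : nat) (f : nat -> R) : R := fold_right Rmult 1 (map f (seq 0 n)).

Definition f_net_sq (N : nat) (t : R) (alpha beta : nat -> R) (x : R) : R :=
  2 / Derive_n logistic 2 t * lsum N (fun j => alpha j * logistic (beta j * x + t)).

Definition f_mult (N : nat) (t : R) (alpha beta : nat -> R) (x y : R) : R :=
  / 4 * (f_net_sq N t alpha beta (x + y) - f_net_sq N t alpha beta (x - y)).

(** Vectors of width m are functions nat -> R, only the
    entries 0..m-1 being relevant. *)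
Record layer := { lw : nat; lW : nat -> nat -> R; lb : nat -> R }.

Record net := { n_in : nat; n_hidden : list layer; n_out_w : nat -> R; n_out_b : R }.

Fixpoint eval_hidden (act : R -> R) (m : nat) (ls : list layer) (x : nat -> R)
  : nat * (nat -> R) :=
  match ls with
  | [] => (m, x)
  | l :: ls' =>
      eval_hidden act (lw l) ls' (fun i => act (lsum m (fun j => lW l i j * x j) + lb l i))
  end.

Definition net_eval (act : R -> R) (f : net) (x : nat -> R) : R :=
  let '(m, y) := eval_hidden act (n_in f) (n_hidden f) x in
  lsum m (fun j => n_out_w f j * y j) + n_out_b f.

Definition last_width (m : nat) (ls : list layer) : nat :=
  fold_left (fun _ l => lw l) ls m.

Fixpoint hidden_wbound (B : R) (m : nat) (ls : list layer) : Prop :=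
  match ls with
  | [] => True
  | l :: ls' =>
      (forall i j, (i < lw l)%nat -> (j < m)%nat -> Rabs (lW l i j) <= B) /\
      (forall i, (i < lw l)%nat -> Rabs (lb l i) <= B) /\
      hidden_wbound B (lw l) ls'
  end.

Definition net_wbound (B : R) (f : net) : Prop :=
  hidden_wbound B (n_in f) (n_hidden f) /\
  (forall j, (j < last_width (n_in f) (n_hidden f))%nat -> Rabs (n_out_w f j) <= B) /\
  Rabs (n_out_b f) <= B.

Definition num_hidden (f : net) : nat := length (n_hidden f).
Definition widths_le (k : nat) (f : net) : Prop := List.Forall (fun l => (lw l <= k)%nat) (n_hidden f).

From Stdlib Require Import Reals List Lra Lia.
From Coquelicot Require Import Coquelicot.
Import ListNotations.
Open Scope R_scope.

(* Each hidden layer halves the number of factors still to be multiplied: two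
   consecutive factors are combined by a block of 2N neurons computing f_mult, and a
   left-over factor is carried over by N neurons computing sum_k c_k logistic (2^k u),
   which equals u up to O(|u|^N) because the c_k annihilate the Taylor coefficients of
   orders 0, 2, ..., N-1.  If the inputs of a block approximate factors of modulus at
   most A <= 1 up to K A^N, they are bounded by (1 + K) A, so its output is again within
   O(A^N) of the product of the factors; after ceil(log2 d) layers a single readout
   approximates x_1 ... x_d. *)

Lemma lsum_shift n f : lsum (S n) f = f 0%nat + lsum n (fun i => f (S i)).
Proof. unfold lsum. simpl. f_equal. rewrite <- seq_shift, map_map. reflexivity. Qed.

Lemma lsum_S n f : lsum (S n) f = lsum n f + f n.
Proof.
  revert f; induction n; intros f.
  - unfold lsum; simpl; lra.
  - rewrite lsum_shift, IHn, (lsum_shift n). lra.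
Qed.

Lemma lsum_ext n f g : (forall i, (i < n)%nat -> f i = g i) -> lsum n f = lsum n g.
Proof.
  induction n; intros H; [reflexivity|].
  rewrite !lsum_S, IHn, H by (lia || (intros; apply H; lia)). reflexivity.
Qed.

Lemma lsum_plus n f g : lsum n (fun i => f i + g i) = lsum n f + lsum n g.
Proof. induction n; [unfold lsum; simpl; lra|]. rewrite !lsum_S, IHn. lra. Qed.

Lemma lsum_scal n a f : lsum n (fun i => a * f i) = a * lsum n f.
Proof. induction n; [unfold lsum; simpl; lra|]. rewrite !lsum_S, IHn. lra. Qed.

Lemma lsum_minus n f g : lsum n (fun i => f i - g i) = lsum n f - lsum n g.
Proof. induction n; [unfold lsum; simpl; lra|]. rewrite !lsum_S, IHn. lra. Qed.

Lemma lsum_zero n f : (forall i, (i < n)%nat -> f i = 0) -> lsum n f = 0.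
Proof.
  induction n; intros H; [reflexivity|].
  rewrite lsum_S, IHn, H by (lia || (intros; apply H; lia)). lra.
Qed.

Lemma lsum_add a b f : lsum (a + b) f = lsum a f + lsum b (fun i => f (a + i)%nat).
Proof.
  induction b.
  - rewrite Nat.add_0_r. unfold lsum at 3; simpl; lra.
  - rewrite Nat.add_succ_r, !lsum_S, IHb. lra.
Qed.

Lemma lsum_mul a b f :
  lsum (a * b) f = lsum b (fun q => lsum a (fun r => f (a * q + r)%nat)).
Proof.
  induction b.
  - rewrite Nat.mul_0_r. reflexivity.
  - rewrite Nat.mul_succ_r, lsum_add, lsum_S, IHb. reflexivity.
Qed.

Lemma lsum_swap a b (F : nat -> nat -> R) :
  lsum a (fun k => lsum b (fun m => F k m)) = lsum b (fun m => lsum a (fun k => F k m)).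
Proof.
  induction a.
  - symmetry. apply lsum_zero. reflexivity.
  - rewrite lsum_S, IHa, <- lsum_plus. apply lsum_ext. intros; rewrite lsum_S; reflexivity.
Qed.

Lemma lsum_single n k f :
  (k < n)%nat -> (forall i, (i < n)%nat -> i <> k -> f i = 0) -> lsum n f = f k.
Proof.
  induction n; intros Hk H; [lia|].
  rewrite lsum_S. destruct (Nat.eq_dec k n) as [->|Hkn].
  - rewrite lsum_zero; [lra|]. intros; apply H; lia.
  - rewrite IHn, (H n) by (auto; lia). lra.
Qed.

Lemma lsum_abs n f : Rabs (lsum n f) <= lsum n (fun i => Rabs (f i)).
Proof.
  induction n; [unfold lsum; simpl; rewrite Rabs_R0; lra|].
  rewrite !lsum_S. eapply Rle_trans; [apply Rabs_triang|]. lra.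
Qed.

Lemma lsum_le n f g : (forall i, (i < n)%nat -> f i <= g i) -> lsum n f <= lsum n g.
Proof.
  induction n; intros H; [unfold lsum; simpl; lra|].
  rewrite !lsum_S. apply Rplus_le_compat; [apply IHn; intros|]; apply H; lia.
Qed.

Lemma lsum_nonneg n f : (forall i, (i < n)%nat -> 0 <= f i) -> 0 <= lsum n f.
Proof. intros H. rewrite <- (lsum_zero n (fun _ => 0)) by reflexivity. now apply lsum_le. Qed.

Lemma sum_f_R0_lsum f n : sum_f_R0 f n = lsum (S n) f.
Proof. induction n; [unfold lsum; simpl; lra|]. now rewrite lsum_S, <- IHn. Qed.

Lemma lprod_S n f : lprod (S n) f = lprod n f * f n.
Proof.
  unfold lprod. rewrite seq_S, map_app, fold_right_app. simpl.
  induction (map f (seq 0 n)); simpl; [lra|]. rewrite IHl. lra.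
Qed.

Lemma lprod_ext n f g : (forall i, (i < n)%nat -> f i = g i) -> lprod n f = lprod n g.
Proof.
  induction n; intros H; [reflexivity|].
  rewrite !lprod_S, IHn, H by (lia || (intros; apply H; lia)). reflexivity.
Qed.

Lemma lprod_eq0 n k f : (k < n)%nat -> f k = 0 -> lprod n f = 0.
Proof.
  induction n; intros Hk H0; [lia|].
  rewrite lprod_S. destruct (Nat.eq_dec k n) as [<-|Hkn].
  - rewrite H0. ring.
  - rewrite IHn by (auto; lia). ring.
Qed.

Lemma lprod_neq0 n f : (forall i, (i < n)%nat -> f i <> 0) -> lprod n f <> 0.
Proof.
  induction n; intros H; [unfold lprod; simpl; lra|].
  rewrite lprod_S.
  apply Rmult_integral_contrapositive_currified; [apply IHn; intros|]; apply H; lia.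
Qed.

Lemma lprod_pairs k T :
  lprod (2 * k) T = lprod k (fun q => T (2 * q)%nat * T (2 * q + 1)%nat).
Proof.
  induction k; [reflexivity|].
  replace (2 * S k)%nat with (S (S (2 * k))) by lia.
  rewrite !lprod_S, IHk. replace (S (2 * k)) with (2 * k + 1)%nat by lia. ring.
Qed.

Lemma lprod_linear_expand (n : nat) (r : nat -> R) :
  exists a : nat -> R, (forall k, (n < k)%nat -> a k = 0) /\
    forall z, lsum (S n) (fun k => a k * z ^ k) = lprod n (fun i => z - r i).
Proof.
  induction n as [|n [a [Ha Hexp]]].
  - exists (fun k => if (k =? 0)%nat then 1 else 0). split.
    + intros [|k] Hk; [lia|reflexivity].
    + intros z. unfold lsum, lprod; simpl. ring.
  - exists (fun k => match k with 0 => 0 | S k' => a k' end - r n * a k). split.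
    + intros [|k] Hk; [lia|]. rewrite !Ha by lia. ring.
    + intros z. rewrite lprod_S, <- Hexp.
      rewrite (lsum_ext _ _ (fun k => (match k with 0 => 0 | S k' => a k' end) * z ^ k
                                       + - r n * (a k * z ^ k))) by (intros; ring).
      rewrite lsum_plus, lsum_scal, lsum_shift, (lsum_S (S n) (fun k => a k * z ^ k)),
        (Ha (S n)) by lia.
      rewrite (lsum_ext _ _ (fun k => z * (a k * z ^ k))) by (intros; simpl; ring).
      rewrite lsum_scal. ring.
Qed.

Inductive poly_fun : (R -> R) -> Prop :=
  | poly_fun_const a : poly_fun (fun _ => a)
  | poly_fun_id : poly_fun (fun y => y)
  | poly_fun_plus f g : poly_fun f -> poly_fun g -> poly_fun (fun y => f y + g y)
  | poly_fun_mult f g : poly_fun f -> poly_fun g -> poly_fun (fun y => f y * g y)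
  | poly_fun_opp f : poly_fun f -> poly_fun (fun y => - f y).

Lemma poly_fun_derive P : poly_fun P -> exists P', poly_fun P' /\ forall y, is_derive P y (P' y).
Proof.
  induction 1 as [a| |f g Hf [f' [Hf' Df]] Hg [g' [Hg' Dg]]
                 |f g Hf [f' [Hf' Df]] Hg [g' [Hg' Dg]]|f Hf [f' [Hf' Df]]].
  - exists (fun _ => 0). split; [constructor|]. intros; auto_derive; auto.
  - exists (fun _ => 1). split; [constructor|]. intros; auto_derive; auto.
  - exists (fun y => f' y + g' y). split; [now constructor|].
    intros y. now apply (is_derive_plus f g).
  - exists (fun y => f' y * g y + f y * g' y). split; [repeat constructor; auto|].
    intros y. apply (is_derive_mult f g); auto. intros; apply Rmult_comm.
  - exists (fun y => - f' y). split; [now constructor|].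
    intros y. now apply (is_derive_opp f).
Qed.

Lemma poly_fun_bounded_01 P : poly_fun P -> exists M, forall y, 0 <= y <= 1 -> Rabs (P y) <= M.
Proof.
  induction 1 as [a| |f g _ [Mf Hf] _ [Mg Hg]|f g _ [Mf Hf] _ [Mg Hg]|f _ [Mf Hf]].
  - exists (Rabs a); intros; lra.
  - exists 1; intros; rewrite Rabs_pos_eq; lra.
  - exists (Mf + Mg); intros y Hy. eapply Rle_trans; [apply Rabs_triang|].
    specialize (Hf y Hy); specialize (Hg y Hy); lra.
  - exists (Mf * Mg); intros y Hy. rewrite Rabs_mult.
    apply Rmult_le_compat; auto using Rabs_pos.
  - exists Mf. intros. rewrite Rabs_Ropp. auto.
Qed.

Lemma logistic_bounds x : 0 < logistic x < 1.
Proof.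
  unfold logistic. pose proof (exp_pos (- x)).
  split; [apply Rdiv_lt_0_compat; lra|].
  apply (Rmult_lt_reg_r (1 + exp (- x))); [lra|].
  unfold Rdiv; rewrite Rmult_assoc, Rinv_l by lra. lra.
Qed.

Lemma is_derive_logistic x : is_derive logistic x (logistic x * (1 - logistic x)).
Proof.
  unfold logistic. pose proof (exp_pos (- x)).
  auto_derive; [lra|]. field. lra.
Qed.

Lemma Derive_n_logistic_poly n : exists P, poly_fun P /\ forall x,
  ex_derive_n logistic n x /\ Derive_n logistic n x = P (logistic x).
Proof.
  induction n as [|n [P [HP HDn]]].
  - exists (fun y => y); split; [constructor|]. intros; simpl; auto.
  - destruct (poly_fun_derive P HP) as [P' [HP' HdP]].
    assert (Hd : forall x, is_derive (Derive_n logistic n) x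
                             (P' (logistic x) * (logistic x * (1 - logistic x)))).
    { intros x. apply (is_derive_ext (fun x => P (logistic x))).
      { intros y; symmetry; apply HDn. }
      rewrite Rmult_comm. apply (is_derive_comp P logistic); auto. apply is_derive_logistic. }
    exists (fun y => P' y * (y * (1 - y))). split.
    + repeat constructor; auto.
    + intros x. split; [eexists; apply Hd|]. simpl. now apply is_derive_unique.
Qed.

Lemma ex_derive_n_logistic n x : ex_derive_n logistic n x.
Proof. destruct (Derive_n_logistic_poly n) as [P [_ H]]. apply H. Qed.

Lemma Derive_n_logistic_bounded n : exists M, forall x, Rabs (Derive_n logistic n x) <= M.
Proof.
  destruct (Derive_n_logistic_poly n) as [P [HP H]].
  destruct (poly_fun_bounded_01 P HP) as [M HM].
  exists M. intros x. rewrite (proj2 (H x)). apply HM. pose proof (logistic_bounds x); lra.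
Qed.

Lemma Derive_logistic_0 : Derive_n logistic 1 0 = / 4.
Proof.
  replace (/ 4) with (logistic 0 * (1 - logistic 0))
    by (unfold logistic; rewrite Ropp_0, exp_0; field).
  apply is_derive_unique, is_derive_logistic.
Qed.

Definition taylor_poly (f : R -> R) (n : nat) (v : R) : R :=
  lsum (S n) (fun m => v ^ m / INR (Factorial.fact m) * Derive_n f m 0).

Lemma taylor_remainder_nonneg f n M :
  (forall k x, ex_derive_n f k x) -> (forall x, Rabs (Derive_n f (S n) x) <= M) ->
  forall v, 0 <= v -> Rabs (f v - taylor_poly f n v) <= M * Rabs v ^ S n.
Proof.
  intros Hex HM v Hv.
  assert (HM0 : 0 <= M) by (eapply Rle_trans; [apply Rabs_pos|apply (HM 0)]).
  destruct (Rle_lt_or_eq_dec 0 v Hv) as [Hpos|<-].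
  - destruct (Taylor_Lagrange f n 0 v Hpos (fun _ _ k _ => Hex k _)) as [z [_ Hz]].
    rewrite Rminus_0_r in Hz. rewrite Hz, sum_f_R0_lsum. unfold taylor_poly.
    assert (Hfact : 1 <= INR (Factorial.fact (S n))) by (apply (le_INR 1), Factorial.lt_O_fact).
    replace (_ + _ - _) with (v ^ S n * Derive_n f (S n) z / INR (Factorial.fact (S n)))
      by (field; lra).
    rewrite Rabs_div, Rabs_mult, <- RPow_abs, (Rabs_pos_eq (INR _)) by lra.
    apply Rle_trans with (Rabs v ^ S n * Rabs (Derive_n f (S n) z)).
    + apply Rmult_le_reg_r with (INR (Factorial.fact (S n))); [lra|].
      unfold Rdiv. rewrite Rmult_assoc, Rinv_l, Rmult_1_r by lra.
      rewrite <- (Rmult_1_r (_ * _)) at 1.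
      apply Rmult_le_compat_l; [|exact Hfact].
      apply Rmult_le_pos; [apply pow_le|]; apply Rabs_pos.
    + rewrite Rmult_comm. apply Rmult_le_compat_r; [apply pow_le, Rabs_pos|apply HM].
  - unfold taylor_poly.
    rewrite lsum_shift, lsum_zero by (intros; rewrite pow_i by lia; unfold Rdiv; ring).
    simpl Derive_n. replace (f 0 - _) with 0 by (simpl; field).
    rewrite Rabs_R0. apply Rmult_le_pos; [|apply pow_le]; lra.
Qed.

Lemma taylor_remainder f n M :
  (forall k x, ex_derive_n f k x) -> (forall x, Rabs (Derive_n f (S n) x) <= M) ->
  forall v, Rabs (f v - taylor_poly f n v) <= M * Rabs v ^ S n.
Proof.
  intros Hex HM v. destruct (Rle_or_lt 0 v) as [Hv|Hv]; [now apply taylor_remainder_nonneg|].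
  set (g := fun w => f (- w)).
  assert (Hloc : forall k x, locally x (fun y => forall j, (j <= k)%nat -> ex_derive_n f j y))
    by (intros; apply filter_forall; intros; apply Hex).
  assert (Hg : forall k x, Derive_n g k x = (-1) ^ k * Derive_n f k (- x))
    by (intros; apply Derive_n_comp_opp, Hloc).
  assert (Htaylor : taylor_poly g n (- v) = taylor_poly f n v).
  { unfold taylor_poly. apply lsum_ext. intros m _.
    rewrite Hg, Ropp_0. replace (- v) with (-1 * v) by ring. rewrite Rpow_mult_distr.
    assert (Hsign : (-1) ^ m * (-1) ^ m = 1).
    { rewrite <- Rpow_mult_distr. replace (-1 * -1) with 1 by ring. apply pow1. }
    transitivity ((-1) ^ m * (-1) ^ m * (v ^ m / INR (Factorial.fact m) * Derive_n f m 0));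
      [unfold Rdiv; ring|].
    rewrite Hsign. ring. }
  replace (f v) with (g (- v)) by (unfold g; now rewrite Ropp_involutive).
  rewrite <- Htaylor, <- (Rabs_Ropp v).
  apply taylor_remainder_nonneg; [| |lra].
  - intros; apply ex_derive_n_comp_opp, Hloc.
  - intros x. rewrite Hg, Rabs_mult, pow_1_abs, Rmult_1_l. apply HM.
Qed.

Lemma taylor_poly_dilations f n (c : nat -> R) u :
  lsum (S n) (fun k => c k * taylor_poly f n (2 ^ k * u)) =
  lsum (S n) (fun m => u ^ m / INR (Factorial.fact m) * Derive_n f m 0 *
                       lsum (S n) (fun k => c k * (2 ^ m) ^ k)).
Proof.
  unfold taylor_poly.
  rewrite (lsum_ext _ _ (fun k => lsum (S n) (fun m =>
             c k * ((2 ^ k * u) ^ m / INR (Factorial.fact m) * Derive_n f m 0))))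
    by (intros; symmetry; apply lsum_scal).
  rewrite lsum_swap. apply lsum_ext. intros m _.
  rewrite <- lsum_scal. apply lsum_ext. intros k _.
  rewrite Rpow_mult_distr, <- !pow_mult, Nat.mul_comm. unfold Rdiv; ring.
Qed.

Lemma dilation_sum_error f n M (c : nat -> R) :
  (forall v, Rabs (f v - taylor_poly f n v) <= M * Rabs v ^ S n) -> forall u,
  Rabs (lsum (S n) (fun k => c k * f (2 ^ k * u))
        - lsum (S n) (fun k => c k * taylor_poly f n (2 ^ k * u)))
  <= lsum (S n) (fun k => Rabs (c k) * M * (2 ^ k) ^ S n) * Rabs u ^ S n.
Proof.
  intros Htaylor u. rewrite <- lsum_minus.
  eapply Rle_trans; [apply lsum_abs|]. rewrite Rmult_comm, <- lsum_scal.
  apply lsum_le. intros k _.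
  rewrite <- Rmult_minus_distr_l, Rabs_mult.
  replace (Rabs u ^ S n * (Rabs (c k) * M * (2 ^ k) ^ S n))
    with (Rabs (c k) * (M * Rabs (2 ^ k * u) ^ S n)).
  - apply Rmult_le_compat_l; [apply Rabs_pos|apply Htaylor].
  - rewrite Rabs_mult, (Rabs_pos_eq (2 ^ k)), Rpow_mult_distr by (apply pow_le; lra). ring.
Qed.

(* [c] are the coefficients of the polynomial with roots [2^m], [m = 0, 2, ..., N-1],
   scaled so that the first-order Taylor term of the sum is exactly [u]. *)
Lemma logistic_identity_approx N : (2 <= N)%nat ->
  exists (c : nat -> R) (K : R), 0 <= K /\ forall u,
    Rabs (lsum N (fun k => c k * logistic (2 ^ k * u)) - u) <= K * Rabs u ^ N.
Proof.
  intros HN. destruct N as [|n]; [lia|].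
  destruct (Derive_n_logistic_bounded (S n)) as [M HM].
  assert (HM0 : 0 <= M) by (eapply Rle_trans; [apply Rabs_pos|apply (HM 0)]).
  pose proof (taylor_remainder logistic n M ex_derive_n_logistic HM) as Htaylor.
  set (r := fun i => 2 ^ (if (i =? 0)%nat then 0 else S i)).
  destruct (lprod_linear_expand n r) as [a [_ Ha]].
  set (Q := fun z => lprod n (fun i => z - r i)).
  assert (HQ2 : Q 2 <> 0).
  { apply lprod_neq0. intros i _. unfold r.
    destruct (Nat.eqb_spec i 0) as [_|Hi]; [simpl; lra|].
    destruct i as [|j]; [lia|]. pose proof (pow_R1_Rle 2 j). simpl; lra. }
  assert (HQroots : forall m, (m <= n)%nat -> m <> 1%nat -> Q (2 ^ m) = 0).
  { intros m Hm Hm1. unfold Q. destruct m as [|[|m]]; [|lia|].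
    - apply (lprod_eq0 _ 0); [lia|]. unfold r; simpl; ring.
    - apply (lprod_eq0 _ (S m)); [lia|]. unfold r; simpl; ring. }
  set (kappa := / (Derive_n logistic 1 0 * Q 2)).
  set (c := fun k => kappa * a k).
  assert (Hc : forall z, lsum (S n) (fun k => c k * z ^ k) = kappa * Q z).
  { intros z. unfold c, Q. rewrite <- Ha, <- lsum_scal. apply lsum_ext. intros; ring. }
  assert (Hexact : forall u, lsum (S n) (fun k => c k * taylor_poly logistic n (2 ^ k * u)) = u).
  { intros u. rewrite taylor_poly_dilations, (lsum_single (S n) 1); [| lia |].
    - rewrite Hc, !pow_1. unfold kappa. rewrite Derive_logistic_0.
      change (INR (Factorial.fact 1)) with 1. field. exact HQ2.
    - intros m Hm Hm1. rewrite Hc, HQroots by lia. ring. }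
  exists c, (lsum (S n) (fun k => Rabs (c k) * M * (2 ^ k) ^ S n)). split.
  - apply lsum_nonneg. intros k _.
    apply Rmult_le_pos; [apply Rmult_le_pos; [apply Rabs_pos|lra]|apply pow_le, pow_le; lra].
  - intros u. eapply Rle_trans; [|apply dilation_sum_error, Htaylor].
    rewrite Hexact. lra.
Qed.

Definition in_cube (A : R) (d : nat) (x : nat -> R) : Prop :=
  forall j, (j < d)%nat -> -A <= x j <= A.

Definition hidden_out (d : nat) (ls : list layer) (x : nat -> R) : nat -> R :=
  snd (eval_hidden logistic d ls x).

Definition readout (d : nat) (ls : list layer) (g : nat -> R) (x : nat -> R) : R :=
  lsum (last_width d ls) (fun j => g j * hidden_out d ls x j).

Lemma readout_nil d g x : readout d [] g x = lsum d (fun j => g j * x j).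
Proof. reflexivity. Qed.

Lemma eval_hidden_width act m ls x : fst (eval_hidden act m ls x) = last_width m ls.
Proof. revert m x; induction ls; intros; simpl; auto. Qed.

Lemma net_eval_readout f x :
  net_eval logistic f x = readout (n_in f) (n_hidden f) (n_out_w f) x + n_out_b f.
Proof.
  unfold net_eval, readout, hidden_out.
  rewrite (surjective_pairing (eval_hidden _ _ _ x)), eval_hidden_width. reflexivity.
Qed.

Lemma last_width_snoc m ls l : last_width m (ls ++ [l]) = lw l.
Proof. unfold last_width. now rewrite fold_left_app. Qed.

Lemma hidden_out_snoc d ls l x i :
  hidden_out d (ls ++ [l]) x i =
  logistic (lsum (last_width d ls) (fun j => lW l i j * hidden_out d ls x j) + lb l i).
Proof. unfold hidden_out. revert d x. induction ls; intros; simpl; auto. Qed.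

Lemma readout_lin d ls a b g1 g2 x :
  lsum (last_width d ls) (fun j => (a * g1 j + b * g2 j) * hidden_out d ls x j) =
  a * readout d ls g1 x + b * readout d ls g2 x.
Proof.
  unfold readout. rewrite <- !lsum_scal, <- lsum_plus. apply lsum_ext. intros; ring.
Qed.

Record block := { blk_in1 : nat -> R; blk_in2 : nat -> R; blk_bias : R; blk_out : nat -> R }.

Definition block_eval (w : nat) (b : block) (u v : R) : R :=
  lsum w (fun r => blk_out b r * logistic (blk_in1 b r * u + blk_in2 b r * v + blk_bias b)).

(* Block [q] occupies the neurons [w * q + r], [r < w], and reads the readouts
   [g (2 q)] and [g (2 q + 1)] of the previous layer. *)
Definition block_layer (w k : nat) (B : nat -> block) (g : nat -> nat -> R) : layer :=
  {| lw := w * k;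
     lW := fun i j => blk_in1 (B (i / w)%nat) (i mod w) * g (2 * (i / w))%nat j
                    + blk_in2 (B (i / w)%nat) (i mod w) * g (2 * (i / w) + 1)%nat j;
     lb := fun i => blk_bias (B (i / w)%nat) |}.

Definition block_readout (w : nat) (B : nat -> block) (q i : nat) : R :=
  if (i / w =? q)%nat then blk_out (B q) (i mod w) else 0.

Lemma div_mod_block w q r : (r < w)%nat -> ((w * q + r) / w = q /\ (w * q + r) mod w = r)%nat.
Proof.
  intros Hr. split.
  - symmetry. now apply (Nat.div_unique _ _ _ r).
  - symmetry. now apply (Nat.mod_unique _ _ q).
Qed.

Lemma readout_block_layer d ls w k B g x q : (q < k)%nat ->
  readout d (ls ++ [block_layer w k B g]) (block_readout w B q) x =
  block_eval w (B q) (readout d ls (g (2 * q)%nat) x) (readout d ls (g (2 * q + 1)%nat) x).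
Proof.
  intros Hq. unfold readout at 1. rewrite last_width_snoc. cbn [lw block_layer].
  rewrite lsum_mul, (lsum_single k q); [|exact Hq|].
  - apply lsum_ext. intros r Hr. destruct (div_mod_block w q r Hr) as [Hdiv Hmod].
    unfold block_readout. rewrite hidden_out_snoc. cbn [lW lb block_layer].
    rewrite Hdiv, Hmod, Nat.eqb_refl, readout_lin. reflexivity.
  - intros q' _ Hq'. apply lsum_zero. intros r Hr.
    destruct (div_mod_block w q' r Hr) as [Hdiv _].
    unfold block_readout. rewrite Hdiv. destruct (Nat.eqb_spec q' q); [lia|ring].
Qed.

Definition pairs_up (m q : nat) : bool := (2 * q + 1 <? m)%nat.

Definition pair_factors (m : nat) (T : nat -> (nat -> R) -> R) (q : nat) (x : nat -> R) : R :=
  if pairs_up m q then T (2 * q)%nat x * T (2 * q + 1)%nat x else T (2 * q)%nat x.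

Lemma half_up_spec m : (m <= 2 * ((m + 1) / 2) <= m + 1)%nat.
Proof.
  pose proof (Nat.div_mod_eq (m + 1) 2). pose proof (Nat.mod_upper_bound (m + 1) 2). lia.
Qed.

Lemma lprod_pair_factors m T x :
  lprod ((m + 1) / 2) (fun q => pair_factors m T q x) = lprod m (fun i => T i x).
Proof.
  pose proof (half_up_spec m).
  unfold pair_factors, pairs_up. destruct (Nat.Even_or_Odd m) as [[k ->]|[k ->]].
  - replace ((2 * k + 1) / 2)%nat with k by lia. rewrite lprod_pairs.
    apply lprod_ext. intros q Hq. destruct (Nat.ltb_spec (2 * q + 1) (2 * k)); [reflexivity|lia].
  - replace ((2 * k + 1 + 1) / 2)%nat with (S k) by lia.
    replace (lprod (2 * k + 1) _) with (lprod (2 * k) (fun i => T i x) * T (2 * k)%nat x)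
      by (rewrite Nat.add_1_r, lprod_S; reflexivity).
    rewrite lprod_S, lprod_pairs. f_equal.
    + apply lprod_ext. intros q Hq.
      destruct (Nat.ltb_spec (2 * q + 1) (2 * k + 1)); [reflexivity|lia].
    + destruct (Nat.ltb_spec (2 * k + 1) (2 * k + 1)); [lia|ring].
Qed.

Lemma pow_le_self A N : 0 <= A <= 1 -> (1 <= N)%nat -> A ^ N <= A.
Proof.
  intros HA HN. destruct N as [|N]; [lia|]. simpl.
  pose proof (pow_le A N (proj1 HA)). pose proof (pow_incr A 1 N HA). rewrite pow1 in *. nra.
Qed.

Lemma approx_abs_le K A N a T : 0 < A <= 1 -> (1 <= N)%nat -> 0 <= K ->
  Rabs (a - T) <= K * A ^ N -> Rabs T <= A -> Rabs a <= (1 + K) * A.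
Proof.
  intros HA HN HK Ha HT. pose proof (pow_le_self A N ltac:(lra) HN).
  assert (K * A ^ N <= K * A) by (apply Rmult_le_compat_l; lra).
  replace a with ((a - T) + T) by ring. eapply Rle_trans; [apply Rabs_triang|]. lra.
Qed.

Lemma product_approx_error c56 K A N fm a b Ta Tb : 0 < A <= 1 -> (1 <= N)%nat -> 0 <= K ->
  Rabs (a - Ta) <= K * A ^ N -> Rabs (b - Tb) <= K * A ^ N -> Rabs Ta <= A -> Rabs Tb <= A ->
  Rabs (fm - a * b) <= c56 * ((1 + K) * A) ^ N ->
  Rabs (fm - Ta * Tb) <= (c56 * (1 + K) ^ N + (2 + K) * K) * A ^ N.
Proof.
  intros HA HN HK Ha Hb HTa HTb Hf. rewrite Rpow_mult_distr in Hf.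
  pose proof (approx_abs_le K A N a Ta HA HN HK Ha HTa) as Habs.
  pose proof (pow_le A N ltac:(lra)) as HAN.
  replace (fm - Ta * Tb) with ((fm - a * b) + a * (b - Tb) + Tb * (a - Ta)) by ring.
  eapply Rle_trans; [apply Rabs_triang|].
  eapply Rle_trans; [apply Rplus_le_compat_r, Rabs_triang|]. rewrite !Rabs_mult.
  assert (Rabs a * Rabs (b - Tb) <= (1 + K) * K * A ^ N).
  { apply Rle_trans with ((1 + K) * A * (K * A ^ N)).
    - apply Rmult_le_compat; auto using Rabs_pos.
    - rewrite <- (Rmult_1_r ((1 + K) * K * A ^ N)).
      replace ((1 + K) * A * (K * A ^ N)) with ((1 + K) * K * A ^ N * A) by ring.
      apply Rmult_le_compat_l; [apply Rmult_le_pos; [nra|]|]; lra. }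
  assert (Rabs Tb * Rabs (a - Ta) <= K * A ^ N).
  { apply Rle_trans with (A * (K * A ^ N)).
    - apply Rmult_le_compat; auto using Rabs_pos.
    - rewrite <- (Rmult_1_l (K * A ^ N)) at 2. apply Rmult_le_compat_r; nra. }
  lra.
Qed.

Lemma pass_approx_error Kp K A N p a Ta : 0 < A <= 1 -> (1 <= N)%nat -> 0 <= K -> 0 <= Kp ->
  Rabs (a - Ta) <= K * A ^ N -> Rabs Ta <= A -> Rabs (p - a) <= Kp * Rabs a ^ N ->
  Rabs (p - Ta) <= (Kp * (1 + K) ^ N + K) * A ^ N.
Proof.
  intros HA HN HK HKp Ha HTa Hp.
  pose proof (approx_abs_le K A N a Ta HA HN HK Ha HTa) as Habs.
  assert (Rabs a ^ N <= (1 + K) ^ N * A ^ N)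
    by (rewrite <- Rpow_mult_distr; apply pow_incr; split; [apply Rabs_pos|auto]).
  assert (Kp * Rabs a ^ N <= Kp * ((1 + K) ^ N * A ^ N)) by (apply Rmult_le_compat_l; auto).
  replace (p - Ta) with ((p - a) + (a - Ta)) by ring.
  eapply Rle_trans; [apply Rabs_triang|]. lra.
Qed.

Record stage (d N : nat) (ls : list layer) (m : nat) (g : nat -> nat -> R)
    (T : nat -> (nat -> R) -> R) (K : R) : Prop := {
  stage_count : (1 <= m <= d)%nat;
  stage_widths : List.Forall (fun l => (lw l <= 2 * N * d)%nat) ls;
  stage_const : 0 <= K;
  stage_prod : forall x, lprod m (fun i => T i x) = lprod d x;
  stage_approx : forall A x, 0 < A <= 1 -> in_cube A d x -> forall i, (i < m)%nat ->
    Rabs (readout d ls (g i) x - T i x) <= K * A ^ N /\ Rabs (T i x) <= A }.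

Lemma stage_init d N : (1 <= d)%nat ->
  stage d N [] d (fun i j => if (i =? j)%nat then 1 else 0) (fun i x => x i) 0.
Proof.
  intros Hd. split; [lia|constructor|apply Rle_refl|reflexivity|].
  intros A x HA Hx i Hi. split.
  - rewrite readout_nil, (lsum_single d i); [|exact Hi|].
    + rewrite Nat.eqb_refl. cbv beta iota.
      rewrite Rmult_1_l, Rminus_diag, Rabs_R0, Rmult_0_l. apply Rle_refl.
    + intros j _ Hj. destruct (Nat.eqb_spec i j); [lia|ring].
  - apply Rabs_le, Hx, Hi.
Qed.

Section Halving.

Variables (d N : nat) (t : R) (alpha beta c : nat -> R) (c56 Kp : R).
Hypothesis N_pos : (1 <= N)%nat.
Hypothesis c56_nonneg : 0 <= c56.
Hypothesis Kp_nonneg : 0 <= Kp.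
Hypothesis f_mult_error : forall A x y, 0 < A -> -A <= x <= A -> -A <= y <= A ->
  Rabs (f_mult N t alpha beta x y - x * y) <= c56 * A ^ N.
Hypothesis identity_error : forall u,
  Rabs (lsum N (fun k => c k * logistic (2 ^ k * u)) - u) <= Kp * Rabs u ^ N.

Definition mult_scale : R := / 4 * (2 / Derive_n logistic 2 t).

Definition mult_block : block :=
  {| blk_in1 := fun r => if (r <? N)%nat then beta r else beta (r - N)%nat;
     blk_in2 := fun r => if (r <? N)%nat then beta r else - beta (r - N)%nat;
     blk_bias := t;
     blk_out := fun r => if (r <? N)%nat then mult_scale * alpha r
                         else - (mult_scale * alpha (r - N)%nat) |}.

Definition pass_block : block :=
  {| blk_in1 := fun r => 2 ^ r; blk_in2 := fun _ => 0; blk_bias := 0;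
     blk_out := fun r => if (r <? N)%nat then c r else 0 |}.

Lemma mult_block_eval u v : block_eval (2 * N) mult_block u v = f_mult N t alpha beta u v.
Proof.
  unfold block_eval. replace (2 * N)%nat with (N + N)%nat by lia. rewrite lsum_add.
  transitivity (lsum N (fun r => mult_scale * (alpha r * logistic (beta r * (u + v) + t)))
              + lsum N (fun r => - mult_scale * (alpha r * logistic (beta r * (u - v) + t)))).
  - f_equal; apply lsum_ext; intros r Hr; cbn [blk_in1 blk_in2 blk_bias blk_out mult_block].
    + destruct (Nat.ltb_spec r N); [|lia].
      replace (beta r * u + beta r * v + t) with (beta r * (u + v) + t) by ring. ring.
    + destruct (Nat.ltb_spec (N + r) N); [lia|]. replace (N + r - N)%nat with r by lia.
      replace (beta r * u + - beta r * v + t) with (beta r * (u - v) + t) by ring. ring.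
  - rewrite !lsum_scal. unfold f_mult, f_net_sq, mult_scale. ring.
Qed.

Lemma pass_block_eval u v :
  block_eval (2 * N) pass_block u v = lsum N (fun k => c k * logistic (2 ^ k * u)).
Proof.
  unfold block_eval. replace (2 * N)%nat with (N + N)%nat by lia.
  rewrite lsum_add. transitivity (lsum N (fun k => c k * logistic (2 ^ k * u)) + 0); [|ring].
  f_equal; [apply lsum_ext|apply lsum_zero]; intros r Hr;
    cbn [blk_in1 blk_in2 blk_bias blk_out pass_block].
  - destruct (Nat.ltb_spec r N); [|lia]. do 2 f_equal. ring.
  - destruct (Nat.ltb_spec (N + r) N); [lia|ring].
Qed.

Definition halving_block (m q : nat) : block :=
  if pairs_up m q then mult_block else pass_block.

Definition halving_layer (m : nat) (g : nat -> nat -> R) : layer :=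
  block_layer (2 * N) ((m + 1) / 2) (halving_block m) g.

Definition halving_readout (m : nat) : nat -> nat -> R :=
  block_readout (2 * N) (halving_block m).

Definition halving_const (K : R) : R := (c56 + Kp) * (1 + K) ^ N + (3 + K) * K.

Lemma mult_block_error K A u v Tu Tv : 0 < A <= 1 -> 0 <= K ->
  Rabs (u - Tu) <= K * A ^ N -> Rabs (v - Tv) <= K * A ^ N -> Rabs Tu <= A -> Rabs Tv <= A ->
  Rabs (block_eval (2 * N) mult_block u v - Tu * Tv) <= halving_const K * A ^ N.
Proof.
  intros HA HK Hu Hv HTu HTv. rewrite mult_block_eval. eapply Rle_trans.
  - apply (product_approx_error c56 K A N _ u v); auto.
    apply f_mult_error; [nra| |]; apply Rabs_le_between; eapply approx_abs_le; eauto.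
  - apply Rmult_le_compat_r; [apply pow_le; lra|].
    pose proof (pow_le (1 + K) N ltac:(lra)). unfold halving_const. nra.
Qed.

Lemma pass_block_error K A u v Tu : 0 < A <= 1 -> 0 <= K ->
  Rabs (u - Tu) <= K * A ^ N -> Rabs Tu <= A ->
  Rabs (block_eval (2 * N) pass_block u v - Tu) <= halving_const K * A ^ N.
Proof.
  intros HA HK Hu HTu. rewrite pass_block_eval. eapply Rle_trans.
  - apply (pass_approx_error Kp K A N _ u); auto.
  - apply Rmult_le_compat_r; [apply pow_le; lra|].
    pose proof (pow_le (1 + K) N ltac:(lra)). unfold halving_const. nra.
Qed.

Lemma stage_halve ls m g T K : stage d N ls m g T K -> (2 <= m)%nat ->
  stage d N (ls ++ [halving_layer m g]) ((m + 1) / 2) (halving_readout m) (pair_factors m T)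
        (halving_const K).
Proof.
  intros [Hm Hw HK Hprod Happrox] Hm2. pose proof (half_up_spec m) as Hhalf.
  split.
  - lia.
  - apply Forall_app. split; [exact Hw|]. constructor; [|constructor].
    cbn [lw halving_layer block_layer]. apply Nat.mul_le_mono_l. lia.
  - pose proof (pow_le (1 + K) N ltac:(lra)). unfold halving_const.
    apply Rplus_le_le_0_compat; apply Rmult_le_pos; lra.
  - intros x. rewrite lprod_pair_factors. apply Hprod.
  - intros A x HA Hx q Hq.
    unfold halving_readout, halving_layer. rewrite readout_block_layer by exact Hq.
    destruct (Happrox A x HA Hx (2 * q)%nat) as [Eu Tu]; [lia|].
    unfold halving_block, pair_factors. destruct (pairs_up m q) eqn:Hpair.
    + destruct (Happrox A x HA Hx (2 * q + 1)%nat) as [Ev Tv]; [now apply Nat.ltb_lt|].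
      split; [now apply mult_block_error|].
      rewrite Rabs_mult. pose proof (Rabs_pos (T (2 * q)%nat x)). nra.
    + split; [now apply pass_block_error|exact Tu].
Qed.

Lemma stage_reduce L : forall ls m g T K, stage d N ls m g T K -> (m <= 2 ^ L)%nat ->
  exists ls' g' T' K', stage d N ls' 1 g' T' K' /\ (length ls' <= length ls + L)%nat.
Proof.
  induction L as [|L IH]; intros ls m g T K HS Hm.
  - replace m with 1%nat in HS by (pose proof (stage_count _ _ _ _ _ _ _ HS); simpl in Hm; lia).
    exists ls, g, T, K. split; [exact HS|lia].
  - destruct (Nat.le_gt_cases m 1) as [Hm1|Hm2].
    + replace m with 1%nat in HS by (pose proof (stage_count _ _ _ _ _ _ _ HS); lia).
      exists ls, g, T, K. split; [exact HS|lia].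
    + destruct (IH _ _ _ _ _ (stage_halve ls m g T K HS Hm2)) as [ls' [g' [T' [K' [HS' Hlen]]]]].
      { pose proof (half_up_spec m). rewrite Nat.pow_succ_r' in Hm. lia. }
      exists ls', g', T', K'. split; [exact HS'|].
      rewrite length_app in Hlen. cbn in Hlen. lia.
Qed.

End Halving.

Lemma finite_family_bounded n (f : nat -> R) :
  exists B, 0 <= B /\ forall i, (i < n)%nat -> Rabs (f i) <= B.
Proof.
  induction n as [|n [B [HB Hf]]].
  - exists 0. split; [lra|]. intros; lia.
  - exists (B + Rabs (f n)). split; [pose proof (Rabs_pos (f n)); lra|].
    intros i Hi. pose proof (Rabs_pos (f n)). destruct (Nat.eq_dec i n) as [->|Hin]; [lra|].
    specialize (Hf i ltac:(lia)). lra.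
Qed.

Lemma finite_family2_bounded n m (f : nat -> nat -> R) :
  exists B, 0 <= B /\ forall i j, (i < n)%nat -> (j < m)%nat -> Rabs (f i j) <= B.
Proof.
  induction n as [|n [B [HB Hf]]].
  - exists 0. split; [lra|]. intros; lia.
  - destruct (finite_family_bounded m (f n)) as [Bn [HBn Hfn]].
    exists (B + Bn). split; [lra|].
    intros i j Hi Hj. destruct (Nat.eq_dec i n) as [->|Hin].
    + specialize (Hfn j Hj). lra.
    + specialize (Hf i j ltac:(lia) Hj). lra.
Qed.

Lemma hidden_wbound_mono B B' m ls : B <= B' -> hidden_wbound B m ls -> hidden_wbound B' m ls.
Proof.
  revert m; induction ls as [|l ls IH]; simpl; auto.
  intros m HB [HW [Hb Hls]]. split; [|split].
  - intros i j Hi Hj. specialize (HW i j Hi Hj). lra.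
  - intros i Hi. specialize (Hb i Hi). lra.
  - now apply IH.
Qed.

Lemma hidden_wbound_exists m ls : exists B, 0 <= B /\ hidden_wbound B m ls.
Proof.
  revert m; induction ls as [|l ls IH]; intros m.
  - exists 0. split; [lra|exact I].
  - destruct (IH (lw l)) as [B1 [HB1 H1]].
    destruct (finite_family2_bounded (lw l) m (lW l)) as [B2 [HB2 H2]].
    destruct (finite_family_bounded (lw l) (lb l)) as [B3 [HB3 H3]].
    exists (B1 + B2 + B3). split; [lra|]. split; [|split].
    + intros i j Hi Hj. specialize (H2 i j Hi Hj). lra.
    + intros i Hi. specialize (H3 i Hi). lra.
    + apply (hidden_wbound_mono B1); [lra|exact H1].
Qed.

Lemma net_wbound_exists f : exists B, net_wbound B f.
Proof.
  destruct (hidden_wbound_exists (n_in f) (n_hidden f)) as [B1 [HB1 H1]].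
  destruct (finite_family_bounded (last_width (n_in f) (n_hidden f)) (n_out_w f)) as [B2 [HB2 H2]].
  pose proof (Rabs_pos (n_out_b f)).
  exists (B1 + B2 + Rabs (n_out_b f)). split; [|split].
  - apply (hidden_wbound_mono B1); [lra|exact H1].
  - intros j Hj. specialize (H2 j Hj). lra.
  - lra.
Qed.

Theorem lemma11 (N d : nat) (t : R) (alpha beta : nat -> R) (c54 c56 : R) :
  (2 < N)%nat -> (1 <= d)%nat ->
  Derive_n logistic 2 t <> 0 ->
  0 <= c54 ->
  (forall A x, 0 < A -> -A <= x <= A ->
     Rabs (f_net_sq N t alpha beta x - x ^ 2) <= c54 * A ^ N) ->
  0 < c56 ->
  (forall A x y, 0 < A -> -A <= x <= A -> -A <= y <= A ->
     Rabs (f_mult N t alpha beta x y - x * y) <= c56 * A ^ N) ->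
  exists B c57 : R, 0 <= c57 /\
    forall A : R, 0 < A <= 1 -> c56 * 4 ^ (d * N) * A ^ (N - 1) <= 1 ->
    exists f : net,
      n_in f = d /\
      (num_hidden f <= Nat.log2_up d)%nat /\
      widths_le (2 * N * d) f /\
      net_wbound B f /\
      forall x : nat -> R, (forall j, (j < d)%nat -> -A <= x j <= A) ->
        Rabs (net_eval logistic f x - lprod d x) <= c57 * A ^ N.
Proof.
  intros HN Hd _ _ _ Hc56 Hfm.
  destruct (logistic_identity_approx N) as [c [Kp [HKp Hpass]]]; [lia|].
  destruct (stage_reduce d N t alpha beta c c56 Kp ltac:(lia) ltac:(lra) HKp Hfm Hpass
              (Nat.log2_up d) [] d _ _ 0 (stage_init d N Hd))
    as [ls [g [T [K [HS Hlen]]]]].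
  { apply Nat.log2_log2_up_spec. lia. }
  destruct HS as [_ Hw HK Hprod Happrox].
  set (f := {| n_in := d; n_hidden := ls; n_out_w := g 0%nat; n_out_b := 0 |}).
  destruct (net_wbound_exists f) as [B HB].
  exists B, K. split; [exact HK|].
  intros A HA _. exists f. split; [reflexivity|]. split; [exact Hlen|].
  split; [exact Hw|]. split; [exact HB|].
  intros x Hx. rewrite net_eval_readout, Rplus_0_r, <- (Hprod x).
  unfold lprod; simpl. rewrite Rmult_1_r.
  exact (proj1 (Happrox A x HA Hx 0%nat Nat.lt_0_1)).
Qed.
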